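(* Let $R$ be a ring and $\mathbf x$ a parameter sequence on $R$. Then $\operatorname{ht}(\mathbf x)R\ge\ell(\mathbf x)$.
   Context: All rings are commutative with identity. For $x\in R$ let $C(x)$ be the complex $0\to R\to R_x\to 0$ ($R$ in degree $0$, natural localization map); for $\mathbf x=x_1,\dots,x_\ell$ put $C(\mathbf x)=C(x_1)\otimes_R\cdots\otimes_R C(x_\ell)$ and let $H^i_{\mathbf x}(M)$ be the $i$th cohomology of $C(\mathbf x)\otimes_RM$; $\ell(\mathbf x)=\ell$. Let $K(x)$ be $0\to R\xrightarrow{x}R\to 0$ (degrees $1,0$), $K(\mathbf x)=K(x_1)\otimes\cdots\otimes K(x_\ell)$, $H_i(\mathbf x)$ its homology. For $m\ge n$ the chain map $K(\mathbf x^m)\to K(\mathbf x^n)$ ($\mathbf x^m=x_1^m,\dots,x_\ell^m$) is the tensor product of maps given by multiplication by $x_i^{m-n}$ in degree $1$ and identity in degree $0$. $\mathbf x$ is weakly proregular if for every $n$ there is $m\ge n$ with $H_i(\mathbf x^m)\to H_i(\mathbf x^n)$ zero for all $i\ge1$. $\mathbf x$ is a parameter sequence on $R$ if it is weakly proregular, $(\mathbf x)R\neq R$, and $H^{\ell(\mathbf x)}_{\mathbf x}(R)_p\neq0$ for every prime $p\supseteq(\mathbf x)R$. *)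

(* Commutative rings are MathComp's [comPzRingType]
   (non-trivial commutative rings; the zero ring is excluded anyway by the
   hypothesis (x)R <> R). *)
From mathcomp Require Import all_boot all_order all_algebra.
Set Implicit Arguments. Unset Strict Implicit. Unset Printing Implicit Defensive.
Import GRing.Theory.
Local Open Scope ring_scope.

Section Defs.
Variable R : comPzRingType.

Definition ideal_gen_proper (l : nat) (x : 'I_l -> R) : Prop :=
  ~ exists r : 'I_l -> R, \sum_(i < l) r i * x i = 1.

Definition is_prime (p : R -> Prop) : Prop :=
  [/\ p 0,
      (forall a b, p a -> p b -> p (a + b)),
      (forall r a, p a -> p (r * a)),
      ~ p 1
    & (forall a b, p (a * b) -> p a \/ p b)].

Definition strict_incl (p q : R -> Prop) : Prop :=
  (forall r, p r -> q r) /\ exists r, q r /\ ~ p r.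

Definition prime_height_ge (p : R -> Prop) (n : nat) : Prop :=
  exists P : nat -> (R -> Prop),
    (forall i, (i <= n)%N -> is_prime (P i)) /\
    (forall i, (i < n)%N -> strict_incl (P i) (P i.+1)) /\
    (forall r, P n r <-> p r).

(* ht (x)R >= n : every prime containing (x)R has height >= n
   (the height of an ideal is the infimum of heights of primes containing it) *)
Definition gen_ideal_height_ge (l : nat) (x : 'I_l -> R) (n : nat) : Prop :=
  forall p, is_prime p -> (forall i, p (x i)) -> prime_height_ge p n.

(* A chain is a function on subsets S of {0..l-1} (coefficient of e_S);
   it has degree i if it vanishes off subsets of size i. *)
Definition kdeg (l : nat) (c : {set 'I_l} -> R) (i : nat) : Prop :=
  forall S : {set 'I_l}, #|S| <> i -> c S = 0.

(* d(e_S) = sum_{j in S} (-1)^{#{k in S, k<j}} x_j e_{S \ j} *)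
Definition kos_d (l : nat) (x : 'I_l -> R) (c : {set 'I_l} -> R)
  : {set 'I_l} -> R :=
  fun T => \sum_(j < l | j \notin T)
             (-1) ^+ #|[set k in T | (k < j)%N]| * x j * c (j |: T).

(* chain map K(x^m) -> K(x^n), m >= n : e_S |-> (prod_{j in S} x_j^(m-n)) e_S *)
Definition kos_trans (l : nat) (x : 'I_l -> R) (m n : nat)
  (c : {set 'I_l} -> R) : {set 'I_l} -> R :=
  fun S => (\prod_(j in S) x j ^+ (m - n)) * c S.

Definition xpow (l : nat) (x : 'I_l -> R) (m : nat) : 'I_l -> R :=
  fun j => x j ^+ m.

(* H_i(x^m) -> H_i(x^n) is zero: every i-cycle of K(x^m) maps to an
   i-boundary of K(x^n). *)
Definition koszul_map_zero (l : nat) (x : 'I_l -> R) (m n i : nat) : Prop :=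
  forall c, kdeg c i -> (forall T, kos_d (xpow x m) c T = 0) ->
    exists w, kdeg w i.+1 /\
      forall T, kos_d (xpow x n) w T = kos_trans x m n c T.

Definition weakly_proregular (l : nat) (x : 'I_l -> R) : Prop :=
  forall n, exists m, (n <= m)%N /\
    forall i, (1 <= i)%N -> koszul_map_zero x m n i.

(* C^l = R_y with y = x_1...x_l; elements a/y^k are pairs (a,k).
   H^l_x(R) = R_y / (sum_i image of R_{yhat_i} -> R_y), yhat_i = prod_{j<>i} x_j. *)
Definition ytot (l : nat) (x : 'I_l -> R) : R := \prod_(i < l) x i.

Definition frac_eq (y : R) (u v : R * nat) : Prop :=
  exists k, y ^+ k * (u.1 * y ^+ v.2 - v.1 * y ^+ u.2) = 0.

Definition frac_add (y : R) (u v : R * nat) : R * nat :=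
  (u.1 * y ^+ v.2 + v.1 * y ^+ u.2, (u.2 + v.2)%N).

(* localization map R_{yhat_i} -> R_y : c / yhat_i^k |-> c x_i^k / y^k *)
Definition loc_map (l : nat) (x : 'I_l -> R) (i : 'I_l) (u : R * nat)
  : R * nat := (u.1 * x i ^+ u.2, u.2).

Definition cech_top_boundary (l : nat) (x : 'I_l -> R) (u : R * nat) : Prop :=
  exists v : 'I_l -> R * nat,
    frac_eq (ytot x) u
      (\big[frac_add (ytot x)/(0, 0%N)]_(i < l) loc_map x i (v i)).

(* (H^l_x(R))_p <> 0 : some class h in H^l_x(R) stays nonzero in the
   localization, i.e. s*h <> 0 for all s outside p. *)
Definition top_cech_loc_nonzero (l : nat) (x : 'I_l -> R) (p : R -> Prop)
  : Prop :=
  exists u : R * nat, forall s, ~ p s ->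
    ~ cech_top_boundary x (s * u.1, u.2).

Definition parameter_sequence (l : nat) (x : 'I_l -> R) : Prop :=
  [/\ weakly_proregular x,
      ideal_gen_proper x
    & forall p, is_prime p -> (forall i, p (x i)) -> top_cech_loc_nonzero x p].

End Defs.

From mathcomp Require Import all_boot all_order all_algebra.
From mathcomp Require Import ring boolp classical_sets.
Set Implicit Arguments. Unset Strict Implicit. Unset Printing Implicit Defensive.
Import GRing.Theory.
Local Open Scope ring_scope.

(* A nonzero element of (H^l_x(R))_p is represented by a fraction a / y^k,
   y = x_1 ... x_l, such that no s * a / y^k with s outside p is a Cech
   boundary.  Put z = x_l and y' = x_1 ... x_(l-1).  If s z^n a / y'^k were a
   boundary for x_1, ..., x_(l-1), then s a / y^k would be one for x; so the
   ideal of those b with b a / y'^k a boundary avoids the multiplicative set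
   {s z^n | s outside p}.  Krull's separation lemma yields a prime q inside p
   avoiding z, hence q < p, containing x_1, ..., x_(l-1) (as x_i^k a / y'^k is
   a boundary), at which the top class of a / y'^k is still nonzero. *)

Section PrimeSeparation.
Variable R : comPzRingType.
Implicit Types (I J S p q : R -> Prop) (a b r s : R).

Definition is_ideal I :=
  [/\ I 0, forall a b, I a -> I b -> I (a + b) & forall r a, I a -> I (r * a)].

Definition mul_closed S := S 1 /\ forall a b, S a -> S b -> S (a * b).

Lemma prime_mul_closedC p : is_prime p -> mul_closed (fun s => ~ p s).
Proof. by case=> _ _ _ p1 pM; split=> // a b pa pb /pM []. Qed.

Lemma prime_expr p r n : is_prime p -> p (r ^+ n) -> p r.
Proof.
move=> pp; elim: n => [|n IHn]; first by rewrite expr0; case: pp.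
by rewrite exprS; case: pp => _ _ _ _ pM /pM [].
Qed.

Lemma exists_maximal_ideal_avoiding I S :
  is_ideal I -> (forall r, I r -> ~ S r) ->
  exists q, [/\ is_ideal q, (forall r, I r -> q r), (forall r, q r -> ~ S r) &
    forall J, is_ideal J -> (forall r, q r -> J r) -> (exists2 a, J a & ~ q a) ->
      exists2 s, J s & S s].
Proof.
move=> [I0 ID IM] IS.
(* The last clause lets in the empty set, which Zorn_bigcup needs as the
   union of the empty chain. *)
pose P J := [/\ forall r, J r -> ~ S r, forall a b, J a -> J b -> J (a + b),
   forall r a, J a -> J (r * a) & (exists r, J r) -> forall r, I r -> J r].
have [|q [[qS qD qM qI] qmax]] := @Zorn_bigcup R P.
  move=> F FP Ftot; split.
  - by move=> r [X /FP[XS _ _ _] /XS].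
  - move=> a b [X FX Xa] [Y FY Yb].
    have [XY|YX] := Ftot X Y FX FY.
      by exists Y => //; case: (FP Y FY) => _ YD _ _; apply: YD (XY _ Xa) Yb.
    by exists X => //; case: (FP X FX) => _ XD _ _; apply: XD Xa (YX _ Yb).
  - by move=> r a [X FX Xa]; exists X => //; case: (FP X FX) => _ _ XM _; apply: XM.
  - move=> [r0 [X FX Xr0]] r Ir; exists X => //.
    by case: (FP X FX) => _ _ _ XI; apply: XI => //; exists r0.
have Iq r : I r -> q r.
  have [/qI/(_ r)//|q_empty] := pselect (exists r, q r).
  exfalso; apply: (qmax I); last by split=> // _.
  split=> [t qt|]; first by case: q_empty; exists t.
  by move=> Iq; apply: q_empty; exists 0; apply: Iq.
exists q; split=> //; first by split=> //; apply: Iq.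
move=> J [J0 JD JM] qJ [a Ja qa]; apply: contrapT => JS.
apply: (qmax J); first by split=> // => /(_ a Ja).
by split=> // [r Jr Sr|_ r /Iq /qJ//]; apply: JS; exists r.
Qed.

Lemma maximal_ideal_avoiding_prime q S : mul_closed S ->
  is_ideal q -> (forall r, q r -> ~ S r) ->
  (forall J, is_ideal J -> (forall r, q r -> J r) -> (exists2 a, J a & ~ q a) ->
     exists2 s, J s & S s) ->
  is_prime q.
Proof.
move=> [S1 SM] [q0 qD qM] qS qmax.
have meetS a : ~ q a -> exists u1 r, q u1 /\ S (u1 + r * a).
  move=> qa; pose J t := exists u1 r, q u1 /\ t = u1 + r * a.
  have Jid : is_ideal J.
    split; first by exists 0, 0; rewrite mul0r addr0.
    - move=> _ _ [u1 [r1 [qu1 ->]]] [u2 [r2 [qu2 ->]]].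
      by exists (u1 + u2), (r1 + r2); split; [apply: qD | ring].
    - move=> t _ [u1 [r1 [qu1 ->]]].
      by exists (t * u1), (t * r1); split; [apply: qM | ring].
  have qJ t : q t -> J t by exists t, 0; rewrite mul0r addr0.
  have Ja : J a by exists 0, 1; rewrite add0r mul1r.
  by have [_ [u1 [r [qu1 ->]]] St] := qmax J Jid qJ (ex_intro2 _ _ a Ja qa); exists u1, r.
split=> //; first by move/qS.
move=> a b qab; apply: contrapT => /not_orP[qa qb].
have [u1 [r1 [qu1 Sa]]] := meetS a qa.
have [u2 [r2 [qu2 Sb]]] := meetS b qb.
apply: (qS _ _ (SM _ _ Sa Sb)).
have -> : (u1 + r1 * a) * (u2 + r2 * b) =
    (u2 + r2 * b) * u1 + (r1 * a) * u2 + (r1 * r2) * (a * b) by ring.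
by apply: (qD); [apply: (qD)|]; apply: qM.
Qed.

Lemma prime_separation I S : is_ideal I -> mul_closed S ->
  (forall r, I r -> ~ S r) ->
  exists q, [/\ is_prime q, forall r, I r -> q r & forall r, q r -> ~ S r].
Proof.
move=> Iid Smul IS.
have [q [qid Iq qS qmax]] := exists_maximal_ideal_avoiding Iid IS.
by exists q; split=> //; apply: maximal_ideal_avoiding_prime qmax.
Qed.

End PrimeSeparation.

Section Height.
Variable R : comPzRingType.
Implicit Types p q : R -> Prop.

Lemma prime_height_ge0 p : is_prime p -> prime_height_ge p 0.
Proof. by move=> pp; exists (fun=> p). Qed.

Lemma prime_height_geS p q n : is_prime p -> strict_incl q p ->
  prime_height_ge q n -> prime_height_ge p n.+1.
Proof.
move=> pp [qp [z [pz qz]]] [P [Pp [Pincl Pq]]].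
exists (fun i => if (i <= n)%N then P i else p); split; [|split].
- by move=> i _; case: ifP => // /Pp.
- move=> i; rewrite ltnS => le_in; rewrite le_in.
  have [lt_in|ge_in] := ltnP i n; first exact: Pincl.
  have -> : i = n by apply/eqP; rewrite eqn_leq le_in ge_in.
  by split=> [r /Pq /qp //|]; exists z; split=> // /Pq.
- by move=> r; rewrite ltnn.
Qed.

End Height.

Lemma big_frac_add_const_exp (R : comPzRingType) (l : nat) (y : R) (M : nat)
    (F : 'I_l -> R) :
  \big[frac_add y/(0, 0%N)]_(i < l) (F i, M) =
  (\sum_(i < l) F i * y ^+ (l.-1 * M), (l * M)%N).
Proof.
elim: l F => [|l IHl] F; first by rewrite !big_ord0.
rewrite big_ord_recl IHl big_ord_recl /frac_add /=; congr pair.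
case: l {IHl} F => [|l] F; first by rewrite !big_ord0 /= !mul0n mul0r !addr0.
rewrite mulr_suml; congr (_ + _); apply: eq_bigr => i _.
by rewrite -mulrA -exprD mulSn addnC.
Qed.

Section TopCechBoundary.
Variables (R : comPzRingType) (l : nat) (x : 'I_l -> R).

Definition ytot_but (t : 'I_l) : R := \prod_(i < l | i != t) x i.

Lemma mul_ytot_but t : x t * ytot_but t = ytot x.
Proof. by rewrite /ytot (bigD1 t). Qed.

(* In R_y, y = ytot x: a / y^k = sum_i c_i x_i^M / y^M, which is the image of
   (c_i / (ytot_but i)^M)_i under the last Cech differential. *)
Definition top_boundary_wit (k : nat) (a : R) (M K : nat) (c : 'I_l -> R) :=
  ytot x ^+ K * (a * ytot x ^+ M - ytot x ^+ k * \sum_(i < l) c i * x i ^+ M) = 0.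

Definition top_boundary (k : nat) (a : R) :=
  exists M K c, top_boundary_wit k a M K c.

Lemma top_boundary_wit_raise k a M K c i j : top_boundary_wit k a M K c ->
  top_boundary_wit k a (M + j) (K + i) (fun t => c t * ytot_but t ^+ j).
Proof.
rewrite /top_boundary_wit => E.
have -> : \sum_(t < l) c t * ytot_but t ^+ j * x t ^+ (M + j) =
    ytot x ^+ j * \sum_(t < l) c t * x t ^+ M.
  rewrite mulr_sumr; apply: eq_bigr => t _.
  by rewrite -(mul_ytot_but t) exprMn exprD; ring.
by rewrite -[RHS](mulr0 (ytot x ^+ (i + j))) -[X in _ = _ * X]E !exprD; ring.
Qed.

Lemma top_boundary_ideal k : is_ideal (top_boundary k).
Proof.
split.
- exists 0%N, 0%N, (fun=> 0).
  by rewrite /top_boundary_wit big1 => [|i _]; [ring | exact: mul0r].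
- move=> a b [M1 [K1 [c1 E1]]] [M2 [K2 [c2 E2]]].
  have {E1}E1 := top_boundary_wit_raise K2 M2 E1.
  have {E2}E2 := top_boundary_wit_raise K1 M1 E2.
  rewrite [(K2 + K1)%N]addnC [(M2 + M1)%N]addnC in E2.
  exists (M1 + M2)%N, (K1 + K2)%N,
    (fun t => c1 t * ytot_but t ^+ M2 + c2 t * ytot_but t ^+ M1).
  rewrite /top_boundary_wit /= (eq_bigr _ (fun t _ => mulrDl _ _ _)) big_split /=.
  move: E1 E2; rewrite /top_boundary_wit.
  set S1 := \sum_(t < l) _; set S2 := \sum_(t < l) _ => E1 E2.
  by rewrite -[RHS](addr0 0) -[X in _ = X + _]E1 -[X in _ = _ + X]E2; ring.
- move=> r a [M [K [c E]]]; exists M, K, (fun i => r * c i).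
  rewrite /top_boundary_wit /= (eq_bigr _ (fun i _ => esym (mulrA _ _ _))).
  rewrite -mulr_sumr.
  by rewrite -[RHS](mulr0 r) -[X in _ = _ * X]E; ring.
Qed.

Lemma top_boundary_expr k i a : top_boundary k (x i ^+ k * a).
Proof.
exists k, 0%N, (fun j => if j == i then a else 0); rewrite /top_boundary_wit.
rewrite (bigD1 i) //= eqxx big1 => [|j /negbTE ->]; last by rewrite mul0r.
by ring.
Qed.

Lemma top_boundary_cech k a : top_boundary k a -> cech_top_boundary x (a, k).
Proof.
case=> M [K [c E]]; exists (fun i => (c i, M)).
rewrite /loc_map /= big_frac_add_const_exp; exists (K + M)%N => /=.
move: E; rewrite /top_boundary_wit -mulr_suml.
set y := ytot x; set S := \sum_(i < l) _ => E.
case: l x c @y @S E => [|l'] x' c y S E.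
  rewrite {}/y {}/S /ytot !big_ord0 in E *.
  by rewrite -[RHS]E !expr1n; ring.
by rewrite -[RHS](mulr0 (y ^+ (l'.+1 * M))) -[X in _ = _ * X]E mulSn !exprD; ring.
Qed.

End TopCechBoundary.

Definition top_class_nonzero_at (R : comPzRingType) (l : nat) (x : 'I_l -> R)
    (p : R -> Prop) (k : nat) (a : R) :=
  forall s, ~ p s -> ~ top_boundary x k (s * a).

Definition drop_last (R : comPzRingType) (l : nat) (x : 'I_l.+1 -> R) : 'I_l -> R :=
  fun i => x (widen_ord (leqnSn l) i).

Section DropLast.
Variables (R : comPzRingType) (l : nat) (x : 'I_l.+1 -> R).

Lemma ytot_drop_last : ytot x = ytot (drop_last x) * x ord_max.
Proof. by rewrite /ytot big_ord_recr. Qed.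

Lemma top_boundary_drop_last k n b :
  top_boundary (drop_last x) k (x ord_max ^+ n * b) -> top_boundary x k b.
Proof.
case=> M [K [c E]].
set z := x ord_max in E *; set x' := drop_last x in E *.
exists (M + n + k)%N, K, (fun i => if unlift ord_max i is Some j
                   then c j * z ^+ M * ytot_but x' j ^+ (n + k) else 0).
rewrite /top_boundary_wit big_ord_recr /= unlift_none mul0r addr0.
have widen_lift (i : 'I_l) : widen_ord (leqnSn l) i = lift ord_max i.
  by apply: val_inj; rewrite /= /bump leqNgt ltn_ord.
rewrite (eq_bigr (fun i => z ^+ M * ytot x' ^+ (n + k) * (c i * x' i ^+ M))); last first.
  move=> i _; rewrite widen_lift liftK -(mul_ytot_but x' i) -widen_lift.
  by rewrite exprMn !exprD; ring.
rewrite -mulr_sumr; move: E; rewrite /top_boundary_wit.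
set S := \sum_(i < l) _ => E.
rewrite ytot_drop_last -[RHS](mulr0 (z ^+ (K + M + k) * ytot x' ^+ (n + k))).
by rewrite -[X in _ = _ * X]E !exprMn !exprD; ring.
Qed.

Lemma top_class_nonzero_descend p k a : is_prime p -> (forall i, p (x i)) ->
  top_class_nonzero_at x p k a ->
  exists q, [/\ is_prime q, strict_incl q p, forall i, q (drop_last x i)
              & top_class_nonzero_at (drop_last x) q k a].
Proof.
move=> pp px nz; set z := x ord_max.
pose J b := top_boundary (drop_last x) k (b * a).
pose S t := exists s n, ~ p s /\ t = s * z ^+ n.
have Jid : is_ideal J.
  have [bd0 bdD bdM] := top_boundary_ideal (drop_last x) k.
  split=> [|b c|r b]; rewrite /J; first by rewrite mul0r.
    by rewrite mulrDl; apply: bdD.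
  by rewrite -mulrA; apply: bdM.
have Smul : mul_closed S.
  have [_ pM] := prime_mul_closedC pp.
  split; first by exists 1, 0%N; split; [case: pp | rewrite expr0 mulr1].
  move=> _ _ [s1 [n1 [ps1 ->]]] [s2 [n2 [ps2 ->]]]; exists (s1 * s2), (n1 + n2)%N.
  by split; [apply: pM | rewrite exprD; ring].
have JS b : J b -> ~ S b.
  move=> Jb [s [n [ps eb]]]; apply: (nz s ps); apply: (top_boundary_drop_last (n := n)).
  by move: Jb; rewrite /J eb; congr top_boundary; ring.
have [q [qp Jq qS]] := prime_separation Jid Smul JS.
have qsubp r : q r -> p r.
  by move=> qr; apply: contrapT => pr; apply: (qS r qr); exists r, 0%N; rewrite expr0 mulr1.
exists q; split=> //.
- split=> //; exists z; split=> [|qz]; first exact: px.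
  by apply: (qS z qz); exists 1, 1%N; split; [case: pp | rewrite expr1 mul1r].
- move=> i; apply: (prime_expr (n := k) qp); apply: Jq.
  exact: top_boundary_expr.
- by move=> t qt /Jq.
Qed.

End DropLast.

Lemma prime_height_ge_of_top_class_nonzero (R : comPzRingType) (l : nat)
    (x : 'I_l -> R) p k a :
  is_prime p -> (forall i, p (x i)) -> top_class_nonzero_at x p k a ->
  prime_height_ge p l.
Proof.
elim: l x p => [|l IHl] x p pp px nz; first exact: prime_height_ge0.
have [q [qp qp_incl qx qnz]] := top_class_nonzero_descend pp px nz.
exact: prime_height_geS pp qp_incl (IHl _ _ qp qx qnz).
Qed.

Theorem proposition3p5 (R : comPzRingType) (l : nat) (x : 'I_l -> R) :
  parameter_sequence x -> gen_ideal_height_ge x l.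
Proof.
case=> _ _ top_nz p pp px.
have [[a k] a_nz] := top_nz p pp px.
apply: (prime_height_ge_of_top_class_nonzero (k := k) (a := a) pp px).
by move=> s ps /top_boundary_cech; apply: a_nz.
Qed.
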